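(* Let $f:\{0,1\}^n\to\{\pm1\}$ be $k$-monotone. Then $\sum_{r=0}^{n-1}\mathbf I[f|_r]\le kn$.
   Context: A function $g:\{0,1\}^n\to\{0,1\}$ is monotone if $x\preceq y$ coordinatewise implies $g(x)\le g(y)$; it is $k$-monotone if it is the XOR of $k$ monotone functions. $f:\{0,1\}^n\to\{\pm1\}$ is $k$-monotone if $(1-f)/2$ is $k$-monotone. For $0\le r\le n$, $\binom{[n]}{r}=\{x\in\{0,1\}^n:\sum_ix_i=r\}$ with the uniform distribution and $f|_r$ is the restriction of $f$ to it. For $g:\binom{[n]}{r}\to\{\pm1\}$ and $i,j\in[n]$, $\mathbf I_{ij}[g]=2\Pr_x[g(x^{(i,j)})\ne g(x)]$, where $x$ is uniform on the slice and $x^{(i,j)}$ is $x$ with coordinates $i$ and $j$ swapped; the total influence is $\mathbf I[g]=\frac1n\sum_{1\le i<j\le n}\mathbf I_{ij}[g]$. *)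

From HB Require Import structures.
From mathcomp Require Import all_boot all_order all_algebra.
From mathcomp Require Import fingroup perm.
Set Implicit Arguments. Unset Strict Implicit. Unset Printing Implicit Defensive.
Import Order.TTheory GRing.Theory Num.Theory.
Local Open Scope ring_scope.

(* The hypercube {0,1}^n : points are functions 'I_n -> bool (true = 1). *)
Definition cube (n : nat) := {ffun 'I_n -> bool}.

Definition cube_le n (x y : cube n) : Prop := forall i, x i ==> y i.

Definition monotone_fn n (g : cube n -> bool) : Prop :=
  forall x y : cube n, cube_le x y -> g x ==> g y.

Definition k_monotone n (k : nat) (g : cube n -> bool) : Prop :=
  exists gs : 'I_k -> cube n -> bool,
    (forall j, monotone_fn (gs j)) /\
    (forall x, g x = \big[addb/false]_(j < k) gs j x).

Definition pm_k_monotone n (k : nat) (f : cube n -> rat) : Prop :=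
  k_monotone k (fun x => (1 - f x) / 2 == 1).

Definition weight n (x : cube n) : nat := #|[set i | x i]|.
Definition slice n (r : nat) : {set cube n} := [set x | weight x == r].

Definition swapij n (i j : 'I_n) (x : cube n) : cube n :=
  [ffun l => x (tperm i j l)].

Definition infl_ij n (f : cube n -> rat) (r : nat) (i j : 'I_n) : rat :=
  2 * (#|[set x in slice n r | f (swapij i j x) != f x]|%:R / #|slice n r|%:R).

Definition total_infl n (f : cube n -> rat) (r : nat) : rat :=
  n%:R^-1 * \sum_(i < n) \sum_(j < n | (i < j)%N) infl_ij f r i j.

From mathcomp Require Import all_boot all_order all_algebra.
From mathcomp Require Import perm.
From mathcomp Require Import ring.
Import Order.TTheory GRing.Theory Num.Theory.
Local Open Scope ring_scope.
Set Implicit Arguments. Unset Strict Implicit.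

(* Weight every up-edge of the cube leaving level m by m! (n-m-1)!, the number
   of maximal chains through it.  A monotone function switches at most once
   along a chain, so its weighted edge boundary is at most n!; by
   subadditivity of the boundary under XOR, that of a k-monotone function is
   at most k n!.  On the slice of weight r, a swap x -> x^(i,j) with x_i = 1,
   x_j = 0 is an up-step at j followed by a down-step at i, which bounds the
   swap influence by 2r times the number of boundary up-edges leaving the
   slice.  Normalising and using 4r(n-r) <= n^2 gives the theorem. *)

Section Cube.
Local Open Scope nat_scope.
Variable n : nat.
Implicit Types (x : cube n) (a : 'I_n).

Definition flip a x : cube n := [ffun l => if l == a then ~~ x l else x l].

Lemma flipK a : involutive (flip a).
Proof. by move=> x; apply/ffunP=> l; rewrite !ffunE; case: eqP => // _; rewrite negbK. Qed.

Lemma flip_inj a : injective (flip a).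
Proof. exact: inv_inj (@flipK a). Qed.

Lemma flip_at a x : flip a x a = ~~ x a.
Proof. by rewrite ffunE eqxx. Qed.

Lemma flip_ne a x l : l != a -> flip a x l = x l.
Proof. by rewrite ffunE => /negbTE ->. Qed.

Lemma sum_flip a (F : cube n -> nat) :
  \sum_(x : cube n) F x = \sum_(x : cube n) F (flip a x).
Proof. exact: (reindex_inj (@flip_inj a)). Qed.

Lemma weight_flip_up a x : ~~ x a -> weight (flip a x) = (weight x).+1.
Proof.
move=> xa; rewrite /weight.
have -> : [set i | flip a x i] = a |: [set i | x i].
  by apply/setP=> i; rewrite !inE ffunE; case: eqP => [->|] //=; rewrite (negbTE xa).
by rewrite cardsU1 inE xa.
Qed.

Lemma weight_flip_down a x : x a -> weight (flip a x) = (weight x).-1.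
Proof.
move=> xa; rewrite /weight.
have -> : [set i | flip a x i] = [set i | x i] :\ a.
  by apply/setP=> i; rewrite !inE ffunE; case: eqP => [->|] //=; rewrite xa.
by rewrite [in RHS](cardsD1 a) inE xa.
Qed.

Lemma weight_gt0 a x : x a -> 0 < weight x.
Proof. by move=> xa; rewrite /weight (cardsD1 a) inE xa. Qed.

Lemma weight_le x : weight x <= n.
Proof. by rewrite /weight; apply: leq_trans (max_card _) _; rewrite card_ord. Qed.

Lemma sum_coords x : \sum_(i < n) x i = weight x.
Proof.
rewrite /weight -sum1_card [in RHS]big_mkcond /=; apply: eq_bigr => i _.
by rewrite inE; case: (x i).
Qed.

Lemma sum_coordsN x : \sum_(a < n) ~~ x a = n - weight x.
Proof.
apply: (@addnI (weight x)); rewrite subnKC ?weight_le // -sum_coords -big_split /=.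
rewrite (eq_bigr (fun _ => 1)); last by move=> a _; case: (x a).
by rewrite sum1_card card_ord.
Qed.

Lemma sum_coords_ne x a : x a -> \sum_(j < n) (x j && (j != a)) = (weight x).-1.
Proof.
move=> xa; rewrite -sum_coords [in RHS](bigD1 a) //= xa add1n /=.
by rewrite [RHS]big_mkcond; apply: eq_bigr => j _; rewrite andbC; case: (j != a).
Qed.

Lemma sum_weight_full_le1 : \sum_(x : cube n) (weight x == n) <= 1.
Proof.
apply: (@leq_trans (\sum_(x : cube n) (x == [ffun => true]))).
  apply: leq_sum => x _; case/boolP: (weight x == n) => // /eqP wx; rewrite lt0b.
  have xT : [set i | x i] = setT.
    by apply/eqP; rewrite eqEcard subsetT cardsT card_ord /=; apply/eq_leq/esym.
  by apply/eqP/ffunP => i; rewrite ffunE; move/setP/(_ i): xT; rewrite !inE.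
by rewrite (bigD1 ([ffun => true] : cube n)) //= eqxx big1 // => x /negbTE ->.
Qed.

Lemma swapij_flip (i j : 'I_n) x : x i -> ~~ x j -> swapij i j x = flip i (flip j x).
Proof.
move=> xi xj; have ij : i != j by apply: contraNneq xj => <-.
apply/ffunP=> l; rewrite !ffunE.
case: tpermP => [->|->|/eqP li /eqP lj].
- by rewrite eqxx (negbTE ij) xi (negbTE xj).
- by rewrite eqxx eq_sym (negbTE ij) xi xj.
- by rewrite (negbTE li) (negbTE lj).
Qed.

Lemma swapij_id (i j : 'I_n) x : x i = x j -> swapij i j x = x.
Proof. by move=> e; apply/ffunP=> l; rewrite !ffunE; case: tpermP => [->|->|]. Qed.

Lemma swapijC (i j : 'I_n) x : swapij i j x = swapij j i x.
Proof. by apply/ffunP => l; rewrite !ffunE tpermC. Qed.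

Lemma card_slice r : #|slice n r| = 'C(n, r).
Proof.
pose supp x := [set i | x i].
have supp_inj : injective supp.
  by move=> x y /setP e; apply/ffunP => i; move: (e i); rewrite !inE.
rewrite -(card_imset _ supp_inj) -[n in 'C(n, r)]card_ord -card_draws.
suff -> : supp @: slice n r = [set A : {set 'I_n} | #|A| == r] by [].
apply/setP => A; rewrite inE; apply/imsetP/idP => [[x]|hA].
  by rewrite inE => hx ->.
have suppA : supp [ffun i => i \in A] = A by apply/setP => i; rewrite !inE ffunE.
by exists [ffun i => i \in A]; rewrite // inE /weight -/(supp _) suppA.
Qed.

Lemma card_slice_pred r (P : pred (cube n)) :
  #|[set x in slice n r | P x]| = \sum_(x | weight x == r) P x.
Proof.
rewrite -sum1_card big_mkcond [RHS]big_mkcond /=; apply: eq_bigr => x _.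
by rewrite !inE; case: (weight x == r); case: (P x).
Qed.

End Cube.

Section Boundary.
Local Open Scope nat_scope.
Variable n : nat.
Implicit Types (x : cube n) (a : 'I_n).

(* The number of maximal chains of the cube through an up-edge leaving level m. *)
Definition chain_weight m := m`! * (n - m.+1)`!.

Lemma chain_weight_flux m : m <= n ->
  chain_weight m.-1 * m <= chain_weight m * (n - m) + (m == n) * n`!.
Proof.
rewrite /chain_weight; case: m => [|m] hm; first by rewrite muln0.
rewrite /= factS; have [<-|ne] := eqVneq m.+1 n.
  by rewrite subnn fact0 muln0 add0n mul1n muln1 factS mulnC.
have lt : m.+1 < n by rewrite ltn_neqAle ne hm.
by rewrite mul0n addn0 -[n - m.+1]subnSK // factS subnSK //; apply: eq_leq; ring.
Qed.

Lemma fact_chain_weight r : r < n -> n`! = 'C(n, r) * (chain_weight r * (n - r)).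
Proof.
move=> lt; rewrite -(bin_fact (ltnW lt)) /chain_weight -subnSK // factS; ring.
Qed.

Definition changes_up (T : eqType) (g : cube n -> T) x a :=
  ~~ x a && (g (flip a x) != g x).

Definition wboundary (T : eqType) (g : cube n -> T) :=
  \sum_(x : cube n) \sum_(a < n) changes_up g x a * chain_weight (weight x).

Lemma sum_up_edges (c : nat -> nat) (F : cube n -> nat) :
  \sum_(x : cube n) \sum_(a < n) ~~ x a * c (weight x) * F (flip a x)
  = \sum_(x : cube n) F x * (c (weight x).-1 * weight x).
Proof.
rewrite exchange_big /=; under eq_bigr => a _ do rewrite (sum_flip a).
rewrite exchange_big /=; apply: eq_bigr => x _.
rewrite mulnA -{2}sum_coords big_distrr /=; apply: eq_bigr => a _.
rewrite flip_at flipK negbK.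
by case xa: (x a); rewrite /= ?(weight_flip_down xa); ring.
Qed.

(* Along an up-edge a monotone h either stays or jumps from 0 to 1, so the weighted
   boundary is the weighted sum of h over heads minus that over tails; by
   chain_weight_flux these cancel everywhere except at the all-ones point. *)
Lemma wboundary_monotone (h : cube n -> bool) : monotone_fn h -> wboundary h <= n`!.
Proof.
move=> hm; set c := chain_weight.
have up_step x a : changes_up h x a * c (weight x) + ~~ x a * c (weight x) * h x
    = ~~ x a * c (weight x) * h (flip a x).
  rewrite /changes_up; case xa: (x a) => /=; first by rewrite !mul0n.
  have le : cube_le x (flip a x).
    by move=> i; case: (eqVneq i a) => [->|ia]; rewrite ?xa // flip_ne // implybb.
  by move: (hm _ _ le); case: (h x); case: (h (flip a x)) => //= _; ring.
set S := \sum_(x : cube n) h x * (c (weight x) * (n - weight x)).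
have flux : wboundary h + S = \sum_(x : cube n) h x * (c (weight x).-1 * weight x).
  rewrite -sum_up_edges /S /wboundary -big_split; apply: eq_bigr => x _.
  rewrite -sum_coordsN !big_distrr -big_split; apply: eq_bigr => a _ /=.
  by rewrite -up_step; congr (_ + _); ring.
have flux_le x : h x * (c (weight x).-1 * weight x)
    <= h x * (c (weight x) * (n - weight x)) + (weight x == n) * n`!.
  by case: (h x); rewrite ?mul0n ?mul1n // chain_weight_flux // weight_le.
rewrite -(leq_add2r S) flux addnC.
apply: (@leq_trans (\sum_(x : cube n)
    (h x * (c (weight x) * (n - weight x)) + (weight x == n) * n`!))).
  by apply: leq_sum => x _; apply: flux_le.
rewrite big_split leq_add2l -big_distrl -[X in _ <= X]mul1n.
by rewrite leq_mul2r sum_weight_full_le1 orbT.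
Qed.

Lemma changes_up_xor k (h : cube n -> bool) (gs : 'I_k -> cube n -> bool) x a :
  (forall y, h y = \big[addb/false]_(j < k) gs j y) ->
  changes_up h x a <= \sum_(j < k) changes_up (gs j) x a.
Proof.
move=> hE; rewrite /changes_up; case: (x a) => //=; case: eqP => //= ne.
rewrite lt0n sum_nat_eq0; apply/negP => /forallP same.
apply: ne; rewrite !hE; apply: eq_bigr => j _.
by move: (same j); case: (gs j (flip a x)); case: (gs j x).
Qed.

Lemma wboundary_k_monotone k (h : cube n -> bool) :
  k_monotone k h -> wboundary h <= k * n`!.
Proof.
case=> gs [mono hE].
apply: (@leq_trans (\sum_(x : cube n) \sum_(a < n) \sum_(j < k)
    changes_up (gs j) x a * chain_weight (weight x))).
  apply: leq_sum => x _; apply: leq_sum => a _.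
  by rewrite -big_distrl leq_mul2r changes_up_xor ?orbT.
under eq_bigr do rewrite exchange_big.
rewrite exchange_big -[k in k * _]card_ord -sum1_card big_distrl.
by apply: leq_sum => j _; rewrite /= mul1n; apply: wboundary_monotone (mono j).
Qed.

Lemma pm_indicator (t : rat) : (t = 1 \/ t = -1 -> ((1 - t) / 2 == 1) = (t == -1))%R.
Proof. by case=> ->. Qed.

Lemma wboundary_pm k (f : cube n -> rat) :
  (forall x, f x = 1 \/ f x = -1)%R -> pm_k_monotone k f -> wboundary f <= k * n`!.
Proof.
move=> hpm /wboundary_k_monotone; apply: leq_trans; apply: eq_leq.
apply: eq_bigr => x _; apply: eq_bigr => a _; congr (_ * _); rewrite /changes_up.
by rewrite !pm_indicator //; case: (hpm x) => ->; case: (hpm (flip a x)) => ->.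
Qed.

End Boundary.

Lemma sum_lt_pairs_le n (T U : 'I_n -> 'I_n -> nat) :
  (forall i j : 'I_n, i < j -> T i j <= U i j + U j i)%N ->
  (\sum_(i < n) \sum_(j < n | i < j) T i j <= \sum_(i < n) \sum_(j < n) U i j)%N.
Proof.
move=> TU; under eq_bigr do rewrite big_mkcond /=.
apply: (@leq_trans (\sum_(i < n) \sum_(j < n) ((i < j) * U i j + (i < j) * U j i))%N).
  apply: leq_sum => i _; apply: leq_sum => j _.
  by case: ltnP => ij; rewrite ?mul1n ?mul0n // TU.
under eq_bigr do rewrite big_split.
rewrite big_split /= [X in (_ + X <= _)%N]exchange_big -big_split.
apply: leq_sum => i _; rewrite -big_split; apply: leq_sum => j _ /=.
by rewrite -mulnDl; case: ltngtP; rewrite ?mul1n ?mul0n.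
Qed.

Section Slices.
Local Open Scope nat_scope.
Variables (n : nat) (T : eqType) (g : cube n -> T).

Definition slice_boundary r :=
  \sum_(x : cube n | weight x == r) \sum_(a < n) changes_up g x a.

Lemma slice_boundary_down r :
  \sum_(w : cube n | weight w == r.+1) \sum_(i < n) (w i && (g (flip i w) != g w))
  = slice_boundary r.
Proof.
rewrite exchange_big [RHS]exchange_big /=.
apply: eq_bigr => i _; rewrite big_mkcond [RHS]big_mkcond /= (sum_flip i).
apply: eq_bigr => x _; rewrite flip_at flipK /changes_up.
case xi: (x i) => /=; first by rewrite !if_same.
by rewrite weight_flip_up ?xi // eqSS [g x == _]eq_sym.
Qed.

Lemma sum_slice_boundary :
  \sum_(r < n) slice_boundary r * chain_weight n r <= wboundary g.
Proof.
rewrite /wboundary (partition_big (fun x : cube n => inord (weight x) : 'I_n.+1) xpredT) //=.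
rewrite big_ord_recr /= -[X in X <= _]addn0 leq_add //; apply: eq_leq.
apply: eq_bigr => r _; rewrite /slice_boundary big_distrl /=.
apply: eq_big => [x|x /eqP wx]; first by rewrite -val_eqE /= inordK ?ltnS ?weight_le.
by rewrite big_distrl /= wx.
Qed.

Lemma sum_slice_up_changes r :
  \sum_(i < n) \sum_(j < n) \sum_(x : cube n | weight x == r) (x i && changes_up g x j)
  = r * slice_boundary r.
Proof.
under eq_bigr do rewrite exchange_big.
rewrite exchange_big /slice_boundary big_distrr /=.
apply: eq_bigr => x /eqP wx; rewrite exchange_big /=.
under eq_bigr do under eq_bigr do rewrite -mulnb.
under eq_bigr do rewrite -big_distrl /= sum_coords wx.
by rewrite big_distrr.
Qed.

Lemma sum_slice_down_after_up r j :
  \sum_(x : cube n | weight x == r) \sum_(i < n)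
     (x i && ~~ x j && (g (flip i (flip j x)) != g (flip j x)))
  = \sum_(w : cube n | weight w == r.+1)
      w j * \sum_(i < n) (w i && (i != j) && (g (flip i w) != g w)).
Proof.
rewrite big_mkcond [RHS]big_mkcond /= (sum_flip j).
apply: eq_bigr => w _; rewrite flipK flip_at negbK.
case wj: (w j); last first.
  rewrite mul0n if_same; case: ifP => // _.
  by rewrite big1 // => i _; rewrite andbF.
rewrite weight_flip_down // -(prednK (weight_gt0 wj)) eqSS.
case: ifP => // _; rewrite mul1n; apply: eq_bigr => i _; rewrite andbT.
case: (eqVneq i j) => [->|ij]; first by rewrite flip_at wj.
by rewrite /= andbT flip_ne.
Qed.

Lemma sum_slice_down_changes r :
  \sum_(i < n) \sum_(j < n) \sum_(x : cube n | weight x == r)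
     (x i && ~~ x j && (g (flip i (flip j x)) != g (flip j x)))
  = r * slice_boundary r.
Proof.
rewrite exchange_big /=; under eq_bigr do rewrite exchange_big /=.
under eq_bigr do rewrite sum_slice_down_after_up.
rewrite exchange_big /= -slice_boundary_down big_distrr /=.
apply: eq_bigr => w /eqP ww.
under eq_bigr do rewrite big_distrr /=.
rewrite exchange_big big_distrr /=; apply: eq_bigr => i _.
have -> : \sum_(j < n) w j * (w i && (i != j) && (g (flip i w) != g w))
    = (w i && (g (flip i w) != g w)) * \sum_(j < n) (w j && (j != i)).
  rewrite big_distrr /=; apply: eq_bigr => j _.
  by rewrite eq_sym; case: (w i); case: (w j); case: (j != i); case: (_ != _).
case wi: (w i) => /=; last by rewrite !mul0n muln0.
by rewrite sum_coords_ne // ww mulnC.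
Qed.

Lemma swap_changes_le r :
  \sum_(i < n) \sum_(j < n | i < j) #|[set x in slice n r | g (swapij i j x) != g x]|
  <= 2 * r * slice_boundary r.
Proof.
pose U (i j : 'I_n) := \sum_(x : cube n | weight x == r)
   (x i && ~~ x j && (g (swapij i j x) != g x)).
apply: (@leq_trans (\sum_(i < n) \sum_(j < n) U i j)).
  apply: sum_lt_pairs_le => i j _; rewrite card_slice_pred /U -big_split /=.
  apply: leq_sum => x _.
  case xi: (x i); case xj: (x j) => /=; rewrite ?addn0 ?add0n //.
  - by rewrite swapij_id ?xi ?xj ?eqxx.
  - by rewrite swapijC.
  - by rewrite swapij_id ?xi ?xj ?eqxx.
apply: (@leq_trans (\sum_(i < n) \sum_(j < n) \sum_(x : cube n | weight x == r)
   ((x i && changes_up g x j) + (x i && ~~ x j && (g (flip i (flip j x)) != g (flip j x)))))).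
  apply: leq_sum => i _; apply: leq_sum => j _; apply: leq_sum => x _.
  case xi: (x i); case xj: (x j) => //=.
  rewrite swapij_flip ?xi ?xj // /changes_up xj /=.
  case: (eqVneq (g (flip i (flip j x))) (g x)) => [->|ne] //=.
  by case: (eqVneq (g (flip j x)) (g x)) => [e|_] //; rewrite e ne.
under eq_bigr do under eq_bigr do rewrite big_split /=.
under eq_bigr do rewrite big_split /=.
by rewrite big_split /= sum_slice_up_changes sum_slice_down_changes mul2n -addnn mulnDl.
Qed.

End Slices.

Lemma ler_nat_ratio (R : numFieldType) (a b p q : nat) : (0 < b)%N -> (0 < q)%N ->
  (a * q <= p * b)%N -> a%:R / b%:R <= p%:R / q%:R :> R.
Proof.
move=> b0 q0 h; rewrite ler_pdivrMr ?ltr0n // mulrAC ler_pdivlMr ?ltr0n //.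
by rewrite -!natrM ler_nat.
Qed.

Lemma total_infl_eq n (f : cube n -> rat) r :
  total_infl f r =
  (2 * \sum_(i < n) \sum_(j < n | i < j)
      #|[set x in slice n r | f (swapij i j x) != f x]|)%N%:R / (n * 'C(n, r))%N%:R.
Proof.
rewrite /total_infl /infl_ij card_slice natrM natr_sum mulr_sumr natrM invfM.
rewrite [RHS]mulrC [RHS]mulrA [RHS]mulr_sumr; apply: eq_bigr => i _.
by rewrite natr_sum !mulr_sumr; apply: eq_bigr => j _; ring.
Qed.

Lemma total_infl_le n (f : cube n -> rat) r : (r < n)%N ->
  total_infl f r <= (n * (slice_boundary f r * chain_weight n r))%N%:R / n`!%:R.
Proof.
move=> lt; rewrite total_infl_eq.
have n_gt0 : (0 < n)%N by apply: leq_ltn_trans lt.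
apply: ler_nat_ratio; [by rewrite muln_gt0 n_gt0 bin_gt0 (ltnW lt) | exact: fact_gt0 |].
set S := (\sum_(i < n) _)%N; set E := slice_boundary f r.
have swap_bound : (2 * S * (n - r) <= n * n * E)%N.
  have agm : (4 * (r * (n - r)) <= n * n)%N.
    by have := (nat_AGM2 r (n - r)).1; rewrite (subnKC (ltnW lt)).
  apply: (@leq_trans (2 * (2 * r * E) * (n - r))).
    by rewrite leq_mul2r leq_mul2l swap_changes_le !orbT.
  apply: (@leq_trans (E * (4 * (r * (n - r))))); first by apply: eq_leq; ring.
  by rewrite mulnC leq_mul2r agm orbT.
rewrite (fact_chain_weight lt).
have -> : (2 * S * ('C(n, r) * (chain_weight n r * (n - r)))
    = 2 * S * (n - r) * ('C(n, r) * chain_weight n r))%N by ring.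
have -> : (n * (E * chain_weight n r) * (n * 'C(n, r))
    = n * n * E * ('C(n, r) * chain_weight n r))%N by ring.
by rewrite leq_mul2r swap_bound orbT.
Qed.

Theorem proposition1 (n k : nat) (f : cube n -> rat)
  (hpm : forall x, f x = 1 \/ f x = -1)
  (hk : pm_k_monotone k f) :
  \sum_(r < n) total_infl f r <= (k * n)%:R.
Proof.
apply: (@le_trans _ _
  (\sum_(r < n) (n * (slice_boundary f r * chain_weight n r))%N%:R / n`!%:R)).
  by apply: ler_sum => r _; apply: total_infl_le.
rewrite -mulr_suml -natr_sum -big_distrr /= ler_pdivrMr ?ltr0n ?fact_gt0 //.
rewrite -natrM ler_nat [(k * n)%N]mulnC -mulnA leq_mul2l.
by rewrite (leq_trans (sum_slice_boundary f) (wboundary_pm hpm hk)) orbT.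
Qed.
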